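(* Let $d\in\mathbb{N}$, $\kappa\in(0,\infty)$, and let $\mathfrak{l}\colon\mathbb{R}^d\times\mathbb{R}^d\to\mathbb{R}$ satisfy $\mathfrak{l}(\theta,\vartheta)=\frac{\kappa}{2}\|\theta-\vartheta\|^2$ for all $\theta,\vartheta\in\mathbb{R}^d$. Let $\gamma\in(0,\kappa^{-1})$, let $(\Omega,\mathcal{F},\mathbb{P})$ be a probability space, let $X_{n,m}\colon\Omega\to\mathbb{R}^d$, $(n,m)\in\mathbb{Z}^2$, be non-degenerate i.i.d. random variables, let $M,\mathfrak{M}\in\mathbb{N}$, and let $\Theta\colon\mathbb{N}_0\times\Omega\to\mathbb{R}^d$ satisfy for all $n\in\mathbb{N}$ $$\Theta_n=\Theta_{n-1}-\frac{\gamma}{M}\Big[\sum_{m=1}^M(\nabla_\theta\mathfrak{l})(\Theta_{n-1},X_{n,m})\Big].$$ Assume $\sup_{n,m\in\mathbb{Z}}\|X_{n,m}(\omega)\|<\infty$ for every $\omega\in\Omega$, that $(X_{n,m})_{(n,m)\in\mathbb{Z}^2}$ and $\Theta_0$ are independent, and let $N\in\mathbb{N}$. Then $$\mathbb{P}\Big(\bigcup_{n=N}^\infty\Big\{\sum_{m=1}^{\mathfrak{M}}\mathfrak{l}(\Theta_n,X_{n,-m})>\sum_{m=1}^{\mathfrak{M}}\mathfrak{l}(\Theta_{n-1},X_{n,-m})\Big\}\Big)=1.$$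
   Context: $\|\cdot\|$ is the Euclidean norm; $\nabla_\theta\mathfrak{l}$ is the gradient in the first argument. For a Borel measure $\mu$ on $\mathbb{R}^d$, $\operatorname{supp}(\mu)=\{x\in\mathbb{R}^d\colon\mu(B)>0\text{ for every open }B\ni x\}$; for a random variable $X$, $\operatorname{supp}(X)=\operatorname{supp}(\mathbb{P}_X)$ with $\mathbb{P}_X$ its law; $X$ is non-degenerate if the interior of $\operatorname{supp}(X)$ is non-empty. *)

From HB Require Import structures.
From mathcomp Require Import all_boot all_order all_algebra.
From mathcomp Require Import all_classical all_reals all_analysis.
Set Implicit Arguments. Unset Strict Implicit. Unset Printing Implicit Defensive.
Import Order.TTheory GRing.Theory Num.Theory.
Import numFieldNormedType.Exports.
Local Open Scope classical_set_scope.
Local Open Scope ring_scope.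

Definition eucl_norm (R : realType) (d : nat) (v : 'rV[R]_d) : R :=
  Num.sqrt (\sum_(i < d) v 0 i ^+ 2).

Definition gradient (R : realType) (d : nat) (f : 'rV[R]_d -> R) (x : 'rV[R]_d)
  : 'rV[R]_d := \row_(i < d) ('D_(delta_mx 0 i) f x).

Definition borel_set (R : realType) (d : nat) (B : set 'rV[R]_d) : Prop :=
  <<s [set U : set 'rV[R]_d | open U] >> B.

Definition rv_measurable (R : realType) (d : nat) (dO : measure_display)
  (Om : measurableType dO) (X : Om -> 'rV[R]_d) : Prop :=
  forall B, borel_set B -> measurable (X @^-1` B).

Definition rv_support (R : realType) (d : nat) (dO : measure_display)
  (Om : measurableType dO) (P : probability Om R) (X : Om -> 'rV[R]_d)
  : set 'rV[R]_d :=
  [set x | forall B : set 'rV[R]_d, open B -> B x -> (0 < P (X @^-1` B))%E].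

Definition non_degenerate (R : realType) (d : nat) (dO : measure_display)
  (Om : measurableType dO) (P : probability Om R) (X : Om -> 'rV[R]_d) : Prop :=
  (interior (rv_support P X)) !=set0.

Definition ident_distr (R : realType) (d : nat) (dO : measure_display)
  (Om : measurableType dO) (P : probability Om R) (I : Type)
  (X : I -> Om -> 'rV[R]_d) : Prop :=
  forall i j B, borel_set B -> P (X i @^-1` B) = P (X j @^-1` B).

Definition mutually_independent (R : realType) (d : nat) (dO : measure_display)
  (Om : measurableType dO) (P : probability Om R) (I : eqType)
  (X : I -> Om -> 'rV[R]_d) : Prop :=
  forall (J : seq I) (B : I -> set 'rV[R]_d), uniq J ->
    (forall j, j \in J -> borel_set (B j)) ->
    P (\bigcap_(j in [set j | j \in J]) (X j @^-1` B j))
    = (\prod_(j <- J) P (X j @^-1` B j))%E.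

Definition gen_sigma (R : realType) (d : nat) (dO : measure_display)
  (Om : measurableType dO) (I : Type) (X : I -> Om -> 'rV[R]_d) : set (set Om) :=
  <<s [set A | exists i B, borel_set B /\ A = X i @^-1` B] >>.

Definition indep_of_family (R : realType) (d : nat) (dO : measure_display)
  (Om : measurableType dO) (P : probability Om R) (I : Type)
  (X : I -> Om -> 'rV[R]_d) (Y : Om -> 'rV[R]_d) : Prop :=
  forall A B, gen_sigma X A -> borel_set B ->
    P (A `&` Y @^-1` B) = (P A * P (Y @^-1` B))%E.

From HB Require Import structures.
From mathcomp Require Import all_boot all_order all_algebra.
From mathcomp Require Import all_classical all_reals all_analysis.
From mathcomp Require Import measurable_realfun ring lra.
Import Order.TTheory GRing.Theory Num.Theory.
Import numFieldNormedType.Exports.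
Local Open Scope classical_set_scope.
Local Open Scope ring_scope.
Set Implicit Arguments. Unset Strict Implicit. Unset Printing Implicit Defensive.

(* For the quadratic loss one SGD step is the convex combination
   [Theta_n = (1 - c) Theta_{n-1} + c (batch mean)] with [c = gamma kappa] in
   (0, 1).  Fix an interior point [z] of the support of the data.  If the
   training data stay near [z] for [k] steps, [Theta] is drawn close to [z];
   if at the next step the training data sit near a point shifted by [rho]
   while the test data stay near [z], that step moves [Theta] away from the
   test data and the test loss increases.  Such a window of [k + 1] steps has a
   fixed positive probability, and windows with disjoint index sets are
   independent, so almost surely one of them occurs.  The number [k] of
   contracting steps depends on a bound for [Theta_0] and the data, which is
   finite on every path: a countable union over integer bounds finishes the
   proof. *)

Lemma exists_expr_mul_lt (R : realType) (a b e : R) : 0 <= a < 1 -> 0 < e ->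
  exists n : nat, a ^+ n * b < e.
Proof.
move=> /andP[a_ge0 a_lt1] e_gt0.
have e'_gt0 : 0 < e / (`|b| + 1) by rewrite divr_gt0 // ltr_wpDl.
have a_norm_lt1 : `|a| < 1 by rewrite ger0_norm.
have /cvgrPdist_lt/(_ _ e'_gt0) [n _ small] := cvg_expr a_norm_lt1.
have {small} := small n (leqnn n).
rewrite sub0r normrN ger0_norm ?exprn_ge0 // ltr_pdivlMr ?ltr_wpDl // => lt_e.
exists n; apply: le_lt_trans lt_e; rewrite ler_wpM2l ?exprn_ge0 //.
by rewrite (le_trans (ler_norm b)) // lerDl.
Qed.

Lemma exp_size_le_prod (F : realDomainType) (I : Type) (s : seq I) (f : I -> F) (q : F) :
  0 <= q -> (forall i, q <= f i) -> q ^+ size s <= \prod_(i <- s) f i.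
Proof.
move=> q_ge0 f_ge; elim: s => [|i s IH]; first by rewrite big_nil.
by rewrite big_cons exprS ler_pM ?exprn_ge0.
Qed.

Section euclidean_rows.
Variables (R : realType) (d : nat).

Lemma eucl_norm_sqr (v : 'rV[R]_d) : eucl_norm v ^+ 2 = \sum_(i < d) v 0 i ^+ 2.
Proof. by rewrite sqr_sqrtr // sumr_ge0 // => i _; rewrite sqr_ge0. Qed.

Lemma coord_le_eucl_norm (v : 'rV[R]_d) i : `|v 0 i| <= eucl_norm v.
Proof.
rewrite -sqrtr_sqr ler_sqrt ?sumr_ge0 // => [|j _]; last by rewrite sqr_ge0.
by rewrite (bigD1 i) //= lerDl sumr_ge0 // => j _; rewrite sqr_ge0.
Qed.

Lemma ball_row_coord (y v : 'rV[R]_d) r : ball y r v -> forall i, `|v 0 i - y 0 i| <= r.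
Proof. by case=> _ yv i; have := yv 0 i; rewrite /ball /= distrC => /ltW. Qed.

Lemma derive_along_quadratic (V : normedModType R) (f : V -> R) (a v : V) (b q : R) :
  (forall h, f (h *: v + a) = f a + b * h + q * h ^+ 2) -> 'D_v f a = b.
Proof.
move=> fE; apply: cvg_lim => //.
apply: (@cvg_trans _ ((fun h => b + q * h) @ 0^')).
  apply: near_eq_cvg; near=> h => /=.
  rewrite fE /GRing.scale /=; field.
  by near: h; exact: nbhs_dnbhs_neq.
rewrite (_ : nbhs b = nbhs (b + q * 0)); last by rewrite mulr0 addr0.
by apply: cvgD; [exact: cvg_cst | apply: cvgMl_tmp; exact: nbhs_dnbhs].
Unshelve. all: by end_near.
Qed.

Lemma gradient_half_sqr_dist (k : R) (x a : 'rV[R]_d) :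
  gradient (fun th => k / 2 * eucl_norm (th - x) ^+ 2) a = k *: (a - x).
Proof.
apply/rowP => i; rewrite !mxE; apply: derive_along_quadratic (k / 2) _ => h.
rewrite !eucl_norm_sqr (bigD1 i) //= [in RHS](bigD1 i) //=.
rewrite (eq_bigr (fun j => (a - x) 0 j ^+ 2)) => [|j ji]; last first.
  by rewrite !mxE eqxx /= (negbTE ji) mulr0 add0r.
by rewrite !mxE !eqxx mulr1; field.
Qed.

End euclidean_rows.

Section random_vectors.
Variables (R : realType) (d : nat) (dO : measure_display) (Om : measurableType dO).

Lemma open_borel_set (U : set 'rV[R]_d) : open U -> borel_set U.
Proof. by move=> oU; apply: sub_sigma_algebra. Qed.

Lemma rv_measurable_coord (V : Om -> 'rV[R]_d) i :
  rv_measurable V -> measurable_fun setT (fun w => V w 0 i).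
Proof.
move=> mV; apply: (measurability _ (RGenOInfty.measurableE R)) => //.
move=> _ [_ [y ->] <-]; rewrite setTI.
apply: (mV ((fun v : 'rV[R]_d => v 0 i) @^-1` `]y, +oo[%classic)).
apply: open_borel_set; apply: open_comp => [v _|]; first exact: coord_continuous.
rewrite (_ : `]y, +oo[%classic = [set x | y < x]); first exact: open_gt.
by apply/seteqP; split => x /=; rewrite in_itv /= andbT.
Qed.

End random_vectors.

Section real_probability.
Variables (R : realType) (dO : measure_display) (Om : measurableType dO).
Variable P : probability Om R.

Definition pr (A : set Om) : R := fine (P A).

Lemma EFin_pr A : measurable A -> P A = (pr A)%:E.
Proof. by move=> mA; rewrite fineK // fin_num_measure. Qed.

Lemma pr_ge0 A : 0 <= pr A.
Proof. by rewrite fine_ge0 // measure_ge0. Qed.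

Lemma pr_le1 A : measurable A -> pr A <= 1.
Proof. by move=> mA; have := probability_le1 P mA; rewrite EFin_pr // lee_fin. Qed.

Lemma pr_setT : pr setT = 1.
Proof. by rewrite /pr probability_setT. Qed.

Lemma pr_setD A B : measurable A -> measurable B -> pr (A `\` B) = pr A - pr (A `&` B).
Proof.
move=> mA mB; apply: EFin_inj.
rewrite EFinB -!EFin_pr ?measureD //; [|exact: measurableI | exact: measurableD].
exact: le_lt_trans (probability_le1 P mA) (ltry 1).
Qed.

End real_probability.

Section independent_boxes.
Variables (R : realType) (d : nat) (dO : measure_display) (Om : measurableType dO).
Variables (P : probability Om R) (I : eqType) (X : I -> Om -> 'rV[R]_d).
Variable B : I -> set 'rV[R]_d.
Hypotheses (X_meas : forall i, rv_measurable (X i))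
  (X_indep : mutually_independent P X) (B_borel : forall i, borel_set (B i)).

Definition box (J : seq I) : set Om := \bigcap_(j in [set j | j \in J]) (X j @^-1` B j).

Lemma box_nil : box [::] = setT.
Proof. by apply/seteqP; split => // w _ j; rewrite /= in_nil. Qed.

Lemma box_cons j J : box (j :: J) = X j @^-1` B j `&` box J.
Proof.
apply/seteqP; split => w /=.
  by move=> inJ; split => [|j' jJ]; apply: inJ; rewrite /= in_cons ?eqxx ?jJ ?orbT.
by move=> [Bj inJ] j'; rewrite /= in_cons => /orP[/eqP -> // | /inJ].
Qed.

Lemma box_cat F J : box (F ++ J) = box F `&` box J.
Proof.
elim: F => [|j F IH]; first by rewrite box_nil setTI.
by rewrite cat_cons !box_cons IH setIA.
Qed.

Lemma box_measurable J : measurable (box J).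
Proof.
elim: J => [|j J IH]; first by rewrite box_nil.
by rewrite box_cons; apply: measurableI => //; exact: X_meas.
Qed.

Lemma pr_box J : pr P (box J) = \prod_(j <- undup J) pr P (X j @^-1` B j).
Proof.
have -> : box J = box (undup J).
  by apply/seteqP; split => w inJ j jJ; apply: inJ; rewrite /= ?mem_undup in jJ *.
apply: EFin_inj; rewrite -EFin_pr; last exact: box_measurable.
rewrite -prodEFin X_indep ?undup_uniq //.
by apply: eq_bigr => j _; rewrite -EFin_pr //; exact: X_meas.
Qed.

Lemma pr_box_cat F J : (forall j, j \in J -> j \notin F) ->
  pr P (box (F ++ J)) = pr P (box F) * pr P (box J).
Proof.
move=> FJ; rewrite !pr_box undup_cat big_cat /=; congr (_ * _).
congr (\prod_(j <- _) _); apply/all_filterP/allP => j.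
by rewrite mem_undup => jF; apply/negP => /FJ; rewrite jF.
Qed.

Variables (J : nat -> seq I) (label : I -> nat).
Hypothesis label_J : forall t j, j \in J t -> label j = t.

Lemma pr_box_bigcap_setC L F : (forall j, j \in F -> (L <= label j)%N) ->
  pr P (box F `&` \bigcap_(t < L) ~` box (J t))
  = pr P (box F) * \prod_(t < L) (1 - pr P (box (J t))).
Proof.
elim: L F => [|L IH] F F_late.
  by rewrite bigcap_mkord !big_ord0 setIT mulr1.
have -> : \bigcap_(t < L.+1) ~` box (J t) = \bigcap_(t < L) ~` box (J t) `&` ~` box (J L).
  by rewrite !bigcap_mkord big_ord_recr.
set A := \bigcap_(t < L) _; set G := box (J L).
have mA : measurable A.
  by apply: bigcap_measurableType => t _; apply/measurableC/box_measurable.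
rewrite (_ : _ `&` _ = (box F `&` A) `\` G); last by apply/seteqP; split=> w /=; tauto.
rewrite pr_setD; [|exact: measurableI (box_measurable _) _ | exact: box_measurable].
rewrite (_ : _ `&` G = box (F ++ J L) `&` A); last first.
  by rewrite box_cat; apply/seteqP; split=> w /=; tauto.
rewrite !IH; last 2 first.
- by move=> j; rewrite mem_cat => /orP[/F_late/ltnW | /label_J ->].
- by move=> j /F_late/ltnW.
rewrite pr_box_cat => [|j /label_J jL]; last by apply/negP => /F_late; rewrite jL ltnn.
by rewrite big_ord_recr /=; ring.
Qed.

Lemma pr_bigcap_setC_box L :
  pr P (\bigcap_(t < L) ~` box (J t)) = \prod_(t < L) (1 - pr P (box (J t))).
Proof.
by have := @pr_box_bigcap_setC L [::]; rewrite box_nil setTI pr_setT mul1r; apply.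
Qed.

Lemma bigcap_setC_box_null (q : R) : 0 < q -> (forall t, q <= pr P (box (J t))) ->
  P (\bigcap_t ~` box (J t)) = 0%E.
Proof.
move=> q_gt0 q_le.
have mC (T : set nat) : measurable (\bigcap_(t in T) ~` box (J t)).
  by apply: bigcap_measurableType => t _; apply/measurableC/box_measurable.
have q_le1 : q <= 1 by apply: le_trans (q_le 0) (pr_le1 _ (box_measurable _)).
have le_geom L : pr P (\bigcap_t ~` box (J t)) <= (1 - q) ^+ L.
  apply: (@le_trans _ _ (pr P (\bigcap_(t < L) ~` box (J t)))).
    rewrite -lee_fin -!EFin_pr //; apply: le_measure; rewrite ?inE //.
    by move=> w inC t _; exact: inC.
  have -> : (1 - q) ^+ L = \prod_(t < L) (1 - q) by rewrite prodr_const card_ord.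
  rewrite pr_bigcap_setC_box.
  apply: ler_prod => t _; rewrite lerD2l lerN2 q_le subr_ge0 pr_le1 //.
  exact: box_measurable.
rewrite EFin_pr //; congr (_%:E); apply/eqP; rewrite eq_le pr_ge0 andbT leNgt.
apply/negP => pr_gt0.
have [L] : exists L : nat, (1 - q) ^+ L * 1 < pr P (\bigcap_t ~` box (J t)).
  by apply: exists_expr_mul_lt => //; apply/andP; split; lra.
by rewrite mulr1 ltNge le_geom.
Qed.

End independent_boxes.

Lemma ler_dist_mean (F : realFieldType) (M : nat) (x : nat -> F) (y r : F) : (0 < M)%N ->
  (forall m, (1 <= m <= M)%N -> `|x m - y| <= r) ->
  `|(\sum_(1 <= m < M.+1) x m) / M%:R - y| <= r.
Proof.
move=> M_gt0 near_y.
have -> : (\sum_(1 <= m < M.+1) x m) / M%:R - y = (\sum_(1 <= m < M.+1) (x m - y)) / M%:R.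
  rewrite sumrB sumr_const_nat subn1 /= -mulr_natr; field.
  by rewrite pnatr_eq0 -lt0n.
rewrite normrM normfV normr_nat ler_pdivrMr ?ltr0n //.
apply: le_trans (ler_norm_sum _ _ _) _.
rewrite (_ : r * M%:R = \sum_(1 <= m < M.+1) r); last first.
  by rewrite sumr_const_nat subn1 mulr_natr.
rewrite big_nat_cond [X in _ <= X]big_nat_cond.
by apply: ler_sum => m /andP[/andP[m_ge1 m_le] _]; apply: near_y; rewrite m_ge1 -ltnS.
Qed.

Lemma convex_step_dist (F : realFieldType) (c t a y : F) : 0 <= c <= 1 ->
  `|(1 - c) * t + c * a - y| <= (1 - c) * `|t - y| + c * `|a - y|.
Proof.
move=> /andP[c_ge0 c_le1]; have c'_ge0 : 0 <= 1 - c by rewrite subr_ge0.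
have -> : (1 - c) * t + c * a - y = (1 - c) * (t - y) + c * (a - y) by ring.
by rewrite (le_trans (ler_normD _ _)) // !normrM (ger0_norm c_ge0) (ger0_norm c'_ge0).
Qed.

(* Any small enough multiple of [c rho] works as tolerance; [1/100] leaves room. *)
Lemma sqr_dist_lt_after_step (F : realFieldType) (c rho t y a b : F) :
  0 < c -> c < 1 -> 0 < rho ->
  `|t - y| <= 2 * (c * rho / 100) -> `|b - y| <= c * rho / 100 ->
  `|a - (y + rho)| <= c * rho / 100 ->
  (t - b) ^+ 2 < ((1 - c) * t + c * a - b) ^+ 2.
Proof.
move=> c_gt0 c_lt1 rho_gt0; set r := c * rho / 100.
move=> /ler_normlP[t1 t2] /ler_normlP[b1 b2] /ler_normlP[a1 a2].
have r_lt : r * 100 < rho by rewrite /r mulfVK // gtr_pMl.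
have r_gt0 : 0 < r by rewrite /r divr_gt0 // mulr_gt0.
have cr_le : c * r <= r by rewrite ger_pMl // ltW.
have step_gt0 : 0 < a - t by lra.
have step_ge : c * (rho - 3 * r) <= c * (a - t) by rewrite ler_pM2l //; lra.
have cr : c * rho = r * 100 by rewrite /r mulfVK.
have -> : ((1 - c) * t + c * a - b) ^+ 2
        = (t - b) ^+ 2 + c * (a - t) * (2 * (t - b) + c * (a - t)) by ring.
by rewrite ltrDl !mulr_gt0 //; lra.
Qed.

Section sgd_quadratic_loss.
Variables (R : realType) (d : nat) (kappa : R) (l : 'rV[R]_d -> 'rV[R]_d -> R).
Variables (gamma : R) (dO : measure_display) (Om : measurableType dO).
Variables (P : probability Om R) (X : int -> int -> Om -> 'rV[R]_d) (M MM : nat).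
Variables (Theta : nat -> Om -> 'rV[R]_d) (N : nat).
Hypotheses (d_gt0 : (0 < d)%N) (kappa_gt0 : 0 < kappa)
  (lE : forall th vt, l th vt = kappa / 2 * eucl_norm (th - vt) ^+ 2)
  (gamma_gt0 : 0 < gamma) (gamma_lt : gamma < kappa^-1)
  (X_meas : forall n m, rv_measurable (X n m))
  (X_indep : mutually_independent P (fun nm : int * int => X nm.1 nm.2))
  (X_ident : ident_distr P (fun nm : int * int => X nm.1 nm.2))
  (M_gt0 : (0 < M)%N) (MM_gt0 : (0 < MM)%N)
  (Theta0_meas : rv_measurable (Theta 0%N))
  (Theta_rec : forall (n : nat) (w : Om), (0 < n)%N ->
     Theta n w = Theta n.-1 w - (gamma / M%:R) *:
       (\sum_(1 <= m < M.+1)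
          gradient (fun th => l th (X n%:Z m%:Z w)) (Theta n.-1 w)))
  (X_bounded : forall w, exists C : R, forall n m, eucl_norm (X n m w) <= C)
  (N_gt0 : (0 < N)%N).

Local Notation c := (gamma * kappa).
Local Notation Xf := (fun j : int * int => X j.1 j.2).

Lemma Xf_meas j : rv_measurable (Xf j). Proof. exact: X_meas. Qed.

Lemma c_gt0 : 0 < c. Proof. by rewrite mulr_gt0. Qed.

Lemma c_lt1 : c < 1. Proof. by rewrite -ltr_pdivlMr // div1r. Qed.

Lemma c_itv : 0 <= c <= 1. Proof. by rewrite (ltW c_gt0) (ltW c_lt1). Qed.

Definition batch_mean (n : nat) w i := (\sum_(1 <= m < M.+1) X n m w 0 i) / M%:R.

Lemma Theta_step n w i : (0 < n)%N ->
  Theta n w 0 i = (1 - c) * Theta n.-1 w 0 i + c * batch_mean n w i.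
Proof.
move=> n_gt0; rewrite Theta_rec // !mxE summxE /batch_mean.
under eq_bigr => m _.
  rewrite (_ : (fun th => l th _) = fun th => kappa / 2 * eucl_norm (th - X n m w) ^+ 2);
    last by apply: funext => th; rewrite lE.
  rewrite gradient_half_sqr_dist !mxE; over.
rewrite -mulr_sumr sumrB sumr_const_nat subn1 /= -mulr_natr; field.
by rewrite pnatr_eq0 -lt0n.
Qed.

Lemma Theta_bounded (r : R) w : (forall i, `|Theta 0 w 0 i| <= r) ->
  (forall n m i, `|X n m w 0 i| <= r) -> forall n i, `|Theta n w 0 i| <= r.
Proof.
move=> Theta0_le X_le; elim=> [//|n IH] i.
have mean_le : `|batch_mean n.+1 w i - 0| <= r.
  by apply: ler_dist_mean => // m _; rewrite subr0.
have := convex_step_dist (Theta n w 0 i) (batch_mean n.+1 w i) 0 c_itv.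
rewrite (Theta_step (n := n.+1)) // !subr0 in mean_le * => step_le.
have := c_gt0; have := c_lt1; have := IH i; nra.
Qed.

Lemma Theta_contracts w i (y r : R) s u : 0 <= r ->
  (forall v m, (v < u)%N -> (1 <= m <= M)%N -> `|X (s + v).+1 m w 0 i - y| <= r) ->
  `|Theta (s + u) w 0 i - y| <= (1 - c) ^+ u * `|Theta s w 0 i - y| + r.
Proof.
move=> r_ge0; elim: u => [|u IH] near_y; first by rewrite addn0 mul1r lerDl.
have mean_near : `|batch_mean (s + u).+1 w i - y| <= r.
  by apply: ler_dist_mean => // m; apply: near_y.
have := convex_step_dist (Theta (s + u) w 0 i) (batch_mean (s + u).+1 w i) y c_itv.
rewrite addnS (Theta_step (n := (s + u).+1)) //= exprS -mulrA => step_le.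
have := IH (fun v m v_lt => near_y v m (ltnW v_lt)).
have := c_gt0; have := c_lt1; nra.
Qed.

Lemma Theta_coord_measurable n i : measurable_fun setT (fun w => Theta n w 0 i).
Proof.
elim: n => [|n IH]; first exact: rv_measurable_coord.
rewrite (_ : (fun w => _) = fun w => (1 - c) * Theta n w 0 i + c * batch_mean n.+1 w i);
  last by apply: funext => w; rewrite Theta_step.
apply: measurable_funD; apply: measurable_funM => //; apply: measurable_funM => //.
by apply: measurable_sum => m; exact: rv_measurable_coord.
Qed.

Definition loss_increase (n : nat) := [set w |
  \sum_(1 <= m < MM.+1) l (Theta n.-1 w) (X n%:Z (- m%:Z) w)
  < \sum_(1 <= m < MM.+1) l (Theta n w) (X n%:Z (- m%:Z) w)].

Lemma test_loss_measurable n (k : int) :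
  measurable_fun setT (fun w => \sum_(1 <= m < MM.+1) l (Theta n w) (X k (- m%:Z) w)).
Proof.
rewrite (_ : (fun w => _) = fun w => \sum_(1 <= m < MM.+1)
    (kappa / 2 * \sum_(i < d) (Theta n w 0 i - X k (- m%:Z) w 0 i) ^+ 2)); last first.
  apply: funext => w; apply: eq_bigr => m _; rewrite lE eucl_norm_sqr.
  by congr (_ * _); apply: eq_bigr => i _; rewrite !mxE.
apply: measurable_sum => m; apply: measurable_funM => //.
apply: measurable_sum => i; apply: measurable_funX.
by apply: measurable_funB; [exact: Theta_coord_measurable | exact: rv_measurable_coord].
Qed.

Lemma loss_increase_measurable n : measurable (loss_increase n).
Proof.
have := measurable_funB (test_loss_measurable n n) (test_loss_measurable n.-1 n)
  measurableT (measurable_itv `]0, +oo[).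
rewrite setTI; congr measurable; apply/seteqP; split => w /=;
  by rewrite in_itv /= andbT subr_gt0.
Qed.

Lemma loss_increase_at_jump n w (y : 'rV[R]_d) (rho : R) : (0 < n)%N -> 0 < rho ->
  (forall i, `|Theta n.-1 w 0 i - y 0 i| <= 2 * (c * rho / 100)) ->
  (forall m i, (1 <= m <= M)%N -> `|X n m w 0 i - (y 0 i + rho)| <= c * rho / 100) ->
  (forall m i, (1 <= m <= MM)%N -> `|X n (- m%:Z) w 0 i - y 0 i| <= c * rho / 100) ->
  loss_increase n w.
Proof.
move=> n_gt0 rho_gt0 Theta_near train_near test_near.
rewrite /loss_increase /= big_nat_cond [X in _ < X]big_nat_cond.
apply: ltr_sum => [|m /andP[m_range _]].
  by apply/hasP; exists 1%N; rewrite ?mem_index_iota /= ?ltnS ?andbT.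
rewrite !lE !eucl_norm_sqr ltr_pM2l ?divr_gt0 //.
apply: ltr_sum => [|i _].
  by apply/hasP; exists (Ordinal d_gt0); rewrite ?mem_index_enum.
rewrite !mxE (Theta_step (n := n)) //.
apply: sqr_dist_lt_after_step c_gt0 c_lt1 rho_gt0 (Theta_near i) (test_near m i m_range) _.
by apply: ler_dist_mean => // m' m'_range; exact: train_near.
Qed.

Section windows.
Variables (z : 'rV[R]_d) (e : R).
Hypotheses (e_gt0 : 0 < e) (ball_supp : ball z e `<=` rv_support P (X 0 0)).

Definition rho := e / 2.
Definition rad := c * rho / 100.
Definition jump_point := z + const_mx rho.

Lemma rho_gt0 : 0 < rho. Proof. by rewrite divr_gt0. Qed.

Lemma rad_gt0 : 0 < rad. Proof. by rewrite !divr_gt0 ?mulr_gt0 ?c_gt0 ?rho_gt0. Qed.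

(* Window [t] consists of the [k + 1] steps from [N + t (k + 1)] on; the
   training data of its last step should lie near [jump_point], all its other
   data near [z]. *)
Definition window k t : seq (int * int) :=
  [seq (Posz (N + t * k.+1 + s), Posz m.+1) | s <- iota 0 k.+1, m <- iota 0 M]
  ++ [seq (Posz (N + t * k.+1 + k), - Posz m.+1) | m <- iota 0 MM].

Definition window_label k (j : int * int) := ((`|j.1|%N - N) %/ k.+1)%N.

Definition window_target k (j : int * int) : set 'rV[R]_d :=
  if (0 <= j.2) && ((`|j.1|%N - N) %% k.+1 == k)%N then ball jump_point rad
  else ball z rad.

Lemma window_label_mem k t j : j \in window k t -> window_label k j = t.
Proof.
rewrite mem_cat => /orP[/allpairsP[[s m] [s_in _ ->]] | /mapP[m _ ->]];
  rewrite /window_label /= -addnA addKn divnMDl // divn_small ?addn0 //.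
by move: s_in; rewrite mem_iota.
Qed.

Lemma window_train_mem k t s m : (s <= k)%N -> (1 <= m <= M)%N ->
  (Posz (N + t * k.+1 + s), Posz m) \in window k t.
Proof.
case: m => // m s_le m_le; rewrite mem_cat; apply/orP; left.
by apply/allpairsP; exists (s, m); rewrite !mem_iota /= ?ltnS.
Qed.

Lemma window_test_mem k t m : (1 <= m <= MM)%N ->
  (Posz (N + t * k.+1 + k), - Posz m) \in window k t.
Proof.
case: m => // m m_le; rewrite mem_cat; apply/orP; right.
by apply/mapP; exists m; rewrite ?mem_iota.
Qed.

Lemma window_target_train k t s m : (s <= k)%N ->
  window_target k (Posz (N + t * k.+1 + s), Posz m)
  = if s == k then ball jump_point rad else ball z rad.
Proof. by move=> s_le; rewrite /window_target /= -addnA addKn modnMDl modn_small. Qed.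

Lemma window_target_test k n m : (0 < m)%N -> window_target k (n, - Posz m) = ball z rad.
Proof. by case: m. Qed.

Lemma window_target_borel k j : borel_set (window_target k j).
Proof.
by rewrite /window_target; case: ifP => _; apply: open_borel_set; exact: ball_open.
Qed.

Definition ball_prob_min :=
  Num.min (pr P (X 0 0 @^-1` ball z rad)) (pr P (X 0 0 @^-1` ball jump_point rad)).

Lemma pr_ball_gt0 y : ball z e y -> 0 < pr P (X 0 0 @^-1` ball y rad).
Proof.
move=> /ball_supp/(_ _ (ball_open y rad) (ballxx y rad_gt0)).
by rewrite EFin_pr ?lte_fin //; apply: X_meas; apply: open_borel_set; exact: ball_open.
Qed.

Lemma ball_prob_min_gt0 : 0 < ball_prob_min.
Proof.
have jump_near : ball z e jump_point.
  split => // i j; rewrite /ball /= !mxE opprD addrA subrr sub0r normrN.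
  by rewrite gtr0_norm ?rho_gt0 // /rho ltr_pdivrMr // ltr_pMr // ltr1n.
by rewrite lt_min !pr_ball_gt0 //; exact: ballxx.
Qed.

Lemma pr_window_ge k t :
  ball_prob_min ^+ (k.+1 * M + MM) <= pr P (box Xf (window_target k) (window k t)).
Proof.
have pm_ge0 := ltW ball_prob_min_gt0.
rewrite (pr_box Xf_meas X_indep (window_target_borel k)).
apply: le_trans (exp_size_le_prod _ pm_ge0 _) => [|j]; last first.
  rewrite /pr (X_ident j (0, 0) (window_target_borel k j)) /window_target /=.
  by case: ifP => _; rewrite ge_min lexx ?orbT.
apply: ler_wiXn2l => //; last first.
  by rewrite (leq_trans (size_undup _)) // size_cat size_allpairs size_map !size_iota.
apply: le_trans (pr_le1 P (X_meas 0 0 (open_borel_set (ball_open z rad))));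
by rewrite /ball_prob_min ge_min lexx.
Qed.

Definition path_bounded (r : R) w := [/\ forall i, `|z 0 i| <= r,
  forall i, `|Theta 0 w 0 i| <= r & forall n m i, `|X n m w 0 i| <= r].

Lemma path_bounded_exists w : exists r : nat, path_bounded r%:R w.
Proof.
have [C X_le] := X_bounded w.
set T := \sum_(i < d) (`|z 0 i| + `|Theta 0 w 0 i|).
have coord_le i : `|z 0 i| + `|Theta 0 w 0 i| <= T.
  by rewrite /T (bigD1 i) //= lerDl sumr_ge0 // => j _; rewrite addr_ge0.
have C_ge0 : 0 <= C by apply: le_trans (X_le 0 0); rewrite sqrtr_ge0.
have T_ge0 : 0 <= T by apply: sumr_ge0 => i _; rewrite addr_ge0.
have := truncnS_gt (C + T); set r := (Num.truncn _).+1 => r_gt.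
exists r; split => [i | i | n m i].
- by have := coord_le i; have := normr_ge0 (Theta 0 w 0 i); lra.
- by have := coord_le i; have := normr_ge0 (z 0 i); lra.
- by have := coord_le_eucl_norm (X n m w) i; have := X_le n m; lra.
Qed.

Lemma window_loss_increase k t r w : path_bounded r w ->
  (1 - c) ^+ k * (2 * r) <= rad ->
  box Xf (window_target k) (window k t) w -> loss_increase (N + t * k.+1 + k) w.
Proof.
move=> [z_le Theta0_le X_le] contracted in_box.
set s0 := (N + t * k.+1)%N.
have s0_gt0 : (0 < s0)%N by rewrite addn_gt0 N_gt0.
have train_near s m i : (s <= k)%N -> (1 <= m <= M)%N ->
    `|X (s0 + s)%N m w 0 i - (if s == k then jump_point else z) 0 i| <= rad.
  move=> s_le m_range; have := in_box _ (window_train_mem t s_le m_range).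
  by rewrite /= window_target_train //; case: eqP => _ /ball_row_coord.
apply: (loss_increase_at_jump (y := z)) rho_gt0 _ _ _ => [|i|m i m_range|m i m_range].
- by rewrite addn_gt0 s0_gt0.
- have -> : (s0 + k).-1 = (s0.-1 + k)%N by case: (s0) s0_gt0.
  apply: le_trans (Theta_contracts (ltW rad_gt0) _) _ => [v m v_lt m_range|].
    rewrite -addSn prednK //; have := train_near v m i (ltnW v_lt) m_range.
    by rewrite ltn_eqF.
  have := Theta_bounded Theta0_le X_le s0.-1 i; have := z_le i.
  have := ler_normB (Theta s0.-1 w 0 i) (z 0 i).
  have : 0 <= (1 - c) ^+ k by rewrite exprn_ge0 // subr_ge0 ltW // c_lt1.
  rewrite /rad in contracted *; nra.
- by have := train_near k m i (leqnn k) m_range; rewrite eqxx /jump_point !mxE.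
- have /andP[m_gt0 _] := m_range; have := in_box _ (window_test_mem k t m_range).
  by rewrite /= window_target_test // => /ball_row_coord.
Qed.

Lemma ae_loss_increase_after :
  P (\bigcup_(n in [set n : nat | (N <= n)%N]) loss_increase n) = 1%E.
Proof.
set U := \bigcup_(n in _) _.
have mU : measurable U by apply: bigcup_measurable => n _; exact: loss_increase_measurable.
have /choice[k_of k_ofP] : forall r : nat, exists k, (1 - c) ^+ k * (2 * r%:R) < rad.
  move=> r; apply: exists_expr_mul_lt rad_gt0.
  by have := c_gt0; have := c_lt1; rewrite subr_ge0 => /ltW -> ?; rewrite ltrBlDr ltrDl.
have notU_sub : ~` U `<=`
    \bigcup_(r : nat) \bigcap_t ~` box Xf (window_target (k_of r)) (window (k_of r) t).
  move=> w notU; have [r bounded] := path_bounded_exists w; exists r => // t _ in_box.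
  apply: notU; exists (N + t * (k_of r).+1 + k_of r)%N; first by rewrite /= -addnA leq_addr.
  exact: window_loss_increase bounded (ltW (k_ofP r)) in_box.
have : P (~` U) = 0%E.
  apply/negligibleP; first exact: measurableC.
  apply: (negligibleS notU_sub); apply: negligible_bigcup => r.
  apply/negligibleP.
    by apply: bigcapT_measurable => t;
      apply/measurableC/(box_measurable Xf_meas (window_target_borel _)).
  exact: (bigcap_setC_box_null Xf_meas X_indep (window_target_borel _)
    (@window_label_mem (k_of r)) (exprn_gt0 _ ball_prob_min_gt0) (pr_window_ge _)).
rewrite probability_setC // EFin_pr // -EFinB => pr_notU.
by congr (_%:E); have := EFin_inj pr_notU; lra.
Qed.

End windows.
End sgd_quadratic_loss.

Unset Implicit Arguments.
Set Strict Implicit.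

Theorem corollary6p15 (R : realType) (d : nat) (kappa : R)
  (l : 'rV[R]_d -> 'rV[R]_d -> R) (gamma : R)
  (dO : measure_display) (Om : measurableType dO) (P : probability Om R)
  (X : int -> int -> Om -> 'rV[R]_d) (M MM : nat)
  (Theta : nat -> Om -> 'rV[R]_d) (N : nat) :
  (0 < d)%N -> 0 < kappa ->
  (forall th vt, l th vt = kappa / 2 * eucl_norm (th - vt) ^+ 2) ->
  0 < gamma -> gamma < kappa^-1 ->
  (forall n m, rv_measurable (X n m)) ->
  (forall n m, non_degenerate P (X n m)) ->
  mutually_independent P (fun nm : int * int => X nm.1 nm.2) ->
  ident_distr P (fun nm : int * int => X nm.1 nm.2) ->
  (0 < M)%N -> (0 < MM)%N ->
  rv_measurable (Theta 0%N) ->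
  (forall (n : nat) (w : Om), (0 < n)%N ->
     Theta n w = Theta n.-1 w - (gamma / M%:R) *:
       (\sum_(1 <= m < M.+1)
          gradient (fun th => l th (X n%:Z m%:Z w)) (Theta n.-1 w))) ->
  (forall w, exists C : R, forall n m, eucl_norm (X n m w) <= C) ->
  indep_of_family P (fun nm : int * int => X nm.1 nm.2) (Theta 0%N) ->
  (0 < N)%N ->
  P (\bigcup_(n in [set n : nat | (N <= n)%N])
       [set w | \sum_(1 <= m < MM.+1) l (Theta n.-1 w) (X n%:Z (- m%:Z) w)
              < \sum_(1 <= m < MM.+1) l (Theta n w) (X n%:Z (- m%:Z) w)])
  = 1%E.
Proof.
move=> d_gt0 kappa_gt0 lE gamma_gt0 gamma_lt X_meas X_nondeg X_indep X_ident
  M_gt0 MM_gt0 Theta0_meas Theta_rec X_bounded _ N_gt0.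
have [z /nbhs_ballP[e e_gt0 ball_supp]] := X_nondeg 0 0.
exact: (ae_loss_increase_after d_gt0 kappa_gt0 lE gamma_gt0 gamma_lt X_meas
  X_indep X_ident M_gt0 MM_gt0 Theta0_meas Theta_rec X_bounded N_gt0 e_gt0 ball_supp).
Qed.
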